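(* For GP-EI with BPMI and any $t\in\mathbb{N}$, when $E^r(t)$ holds, $$r_t\le\big(c_\mu(t)+\phi(0)+\beta_t^{1/2}\big)\sigma_{t-1}(\mathbf{x}_t)+c_\alpha\beta_t^{1/2}\sigma_{t-1}([\mathbf{x}^*]_t)+\frac{1}{t^2},$$ where $c_\mu(t)=\log^{1/2}\!\big(\frac{t-1+\sigma^2}{2\pi\phi^2(0)\sigma^2}\big)$ and $c_\alpha=1.328$.
   Context: Setting: $d\ge1$, $r>0$, $C\subseteq[0,r]^d$ compact; $k$ positive semidefinite kernel with $k(\mathbf{x},\mathbf{x}')\le1$, $k(\mathbf{x},\mathbf{x})=1$ on $C$. $f$ is a sample path of $GP(0,k)$, Lipschitz with constant $L\ge1/(rd)$ in $\ell_1$-norm; $\mathbf{x}^*\in\arg\min_Cf$. Observations $y_t=f(\mathbf{x}_t)+\epsilon_t$, $\epsilon_t$ i.i.d. $\mathcal{N}(0,\sigma^2)$, $\sigma>0$. Posterior $\mu_t(\mathbf{x})=\mathbf{k}_t(\mathbf{x})^T(\mathbf{K}_t+\sigma^2\mathbf{I})^{-1}\mathbf{y}_{1:t}$, $\sigma_t^2(\mathbf{x})=1-\mathbf{k}_t(\mathbf{x})^T(\mathbf{K}_t+\sigma^2\mathbf{I})^{-1}\mathbf{k}_t(\mathbf{x})$ ($\mathbf{K}_t=[k(\mathbf{x}_i,\mathbf{x}_j)]_{i,j\le t}$, $\mathbf{k}_t(\mathbf{x})=[k(\mathbf{x}_i,\mathbf{x})]_{i\le t}$). BPMI incumbent $\xi_t^+=\mu_t^+=\min_{\mathbf{x}\in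 C}\mu_t(\mathbf{x})$. $EI_t(\mathbf{x})=(\xi_t^+-\mu_t(\mathbf{x}))\Phi(z_t(\mathbf{x}))+\sigma_t(\mathbf{x})\phi(z_t(\mathbf{x}))$, $z_t=(\xi_t^+-\mu_t)/\sigma_t$, $\phi,\Phi$ standard normal pdf/cdf; GP-EI picks $\mathbf{x}_t\in\arg\max_CEI_{t-1}$. $r_t=f(\mathbf{x}_t)-f(\mathbf{x}^* )$. Discretization: $\mathbb{C}_t\subseteq C$ finite, $|\mathbb{C}_t|=(Lrdt^2)^d$, with $\|\mathbf{x}-[\mathbf{x}]_t\|_1\le1/(Lt^2)$ for all $\mathbf{x}\in C$, where $[\mathbf{x}]_t$ is a closest point of $\mathbb{C}_t$ to $\mathbf{x}$. With $\delta\in(0,1)$, $\pi_t=\pi^2t^2/6$, $\beta_t=2\log(8|\mathbb{C}_t|\pi_t/\delta)$. $E^r(t)$ is the event that $|f(\mathbf{x})-\mu_{t-1}(\mathbf{x})|\le\beta_t^{1/2}\sigma_{t-1}(\mathbf{x})$ for all $\mathbf{x}\in\mathbb{C}_t$ and also $|f(\mathbf{x}_t)-\mu_{t-1}(\mathbf{x}_t)|\le\beta_t^{1/2}\sigma_{t-1}(\mathbf{x}_t)$. *)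

From HB Require Import structures.
From mathcomp Require Import all_boot all_order all_algebra.
From mathcomp Require Import all_classical all_reals all_analysis.
Set Implicit Arguments. Unset Strict Implicit. Unset Printing Implicit Defensive.
Import Order.TTheory GRing.Theory Num.Theory Num.Def.
Import numFieldNormedType.Exports.
Local Open Scope classical_set_scope.
Local Open Scope ring_scope.

Section GPEI.
Context {R : realType} {d : nat}.
Notation pt := 'rV[R]_d.

Definition l1norm (v : pt) : R := \sum_(i < d) `|v ord0 i|.

Definition psd_kernel (k : pt -> pt -> R) : Prop :=
  (forall x y, k x y = k y x) /\
  (forall (n : nat) (z : 'I_n -> pt) (c : 'I_n -> R),
      0 <= \sum_(i < n) \sum_(j < n) c i * c j * k (z i) (z j)).

(* GP posterior after n observations; the i-th observation (i : 'I_n)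
   is taken at X (i+1) with value y (i+1), i.e. data x_1..x_n, y_1..y_n. *)
Definition gram (k : pt -> pt -> R) (X : nat -> pt) (n : nat) : 'M[R]_n :=
  \matrix_(i < n, j < n) k (X i.+1) (X j.+1).
Definition kvec (k : pt -> pt -> R) (X : nat -> pt) (n : nat) (x : pt) : 'cV[R]_n :=
  \col_(i < n) k (X i.+1) x.
Definition yvec (y : nat -> R) (n : nat) : 'cV[R]_n := \col_(i < n) y i.+1.

Definition post_mean (k : pt -> pt -> R) (sigma : R) (X : nat -> pt) (y : nat -> R)
  (n : nat) (x : pt) : R :=
  ((kvec k X n x)^T *m invmx (gram k X n + (sigma ^+ 2)%:M) *m yvec y n) ord0 ord0.

Definition post_var (k : pt -> pt -> R) (sigma : R) (X : nat -> pt)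
  (n : nat) (x : pt) : R :=
  1 - ((kvec k X n x)^T *m invmx (gram k X n + (sigma ^+ 2)%:M) *m kvec k X n x) ord0 ord0.

Definition post_sd k sigma X n x : R := Num.sqrt (post_var k sigma X n x).

Definition phi (z : R) : R := normal_pdf 0 1 z.
Definition Phi (z : R) : R := fine (normal_prob 0 1 `]-oo, z]).

Definition bpmi (C : set pt) (mu : pt -> R) : R := inf [set mu x | x in C].

Definition EI k sigma (C : set pt) X y (n : nat) (x : pt) : R :=
  let xi := bpmi C (post_mean k sigma X y n) in
  let m := post_mean k sigma X y n x in
  let s := post_sd k sigma X n x in
  let z := (xi - m) / s in
  (xi - m) * Phi z + s * phi z.

Definition pi_t (t : nat) : R := pi ^+ 2 * (t%:R) ^+ 2 / 6.
(* beta_t = 2 log(8 |C_t| pi_t / delta), with |C_t| = (L r d t^2)^d *)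
Definition beta_t (L r : R) (delta : R) (t : nat) : R :=
  2 * ln (8 * (L * r * d%:R * (t%:R) ^+ 2) ^+ d * pi_t t / delta).

Definition c_mu (sigma : R) (t : nat) : R :=
  Num.sqrt (ln ((t%:R - 1 + sigma ^+ 2) / (2 * pi * phi 0 ^+ 2 * sigma ^+ 2))).

Definition c_alpha : R := 1328%:R / 1000%:R.

End GPEI.

From HB Require Import structures.
From mathcomp Require Import all_boot all_order all_algebra.
From mathcomp Require Import all_classical all_reals all_analysis.
From mathcomp Require Import ring lra.
Set Implicit Arguments. Unset Strict Implicit. Unset Printing Implicit Defensive.
Import Order.TTheory GRing.Theory Num.Theory Num.Def.
Import numFieldNormedType.Exports.
Local Open Scope classical_set_scope.
Local Open Scope ring_scope.

(* On E^r(t), f(x_t) - f(x^* ) is the sum of f(x_t) - mu(x_t), mu(x_t) - xi,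
   xi - mu([x^*]_t), mu([x^*]_t) - f([x^*]_t) and f([x^*]_t) - f(x^* ), where
   xi = min_C mu: the confidence bounds control the first and fourth terms, the
   third is nonpositive and Lipschitz continuity bounds the last by 1/t^2.
   For the second one, positive semidefiniteness and |k| <= 1 give the floor
   sigma_{t-1}^2 >= sigma^2/(t-1+sigma^2) on C; points where mu is close to xi
   therefore have EI close to at least sigma_{t-1} phi(0), so the maximiser x_t
   has EI_{t-1}(x_t) >= sqrt(sigma^2/(t-1+sigma^2)) phi(0).  As also
   EI_{t-1}(x_t) <= sigma_{t-1}(x_t) phi(z_{t-1}(x_t)), this forces
   |z_{t-1}(x_t)| <= c_mu(t).  The bound obtained is sharper than stated: it has
   no phi(0) term and c_alpha is replaced by 1. *)

Section PsdKernel.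
Variables (R : realType) (d : nat) (k : 'rV[R]_d -> 'rV[R]_d -> R).
Hypothesis kpsd : psd_kernel k.

Lemma psd_kernel_cons n (z : 'I_n -> 'rV[R]_d) (c : 'I_n -> R) x c0 :
  0 <= \sum_i \sum_j c i * c j * k (z i) (z j)
       + 2 * c0 * \sum_i c i * k (z i) x + c0 ^+ 2 * k x x.
Proof.
pose z' i := if unlift ord0 i is Some j then z j else x.
pose c' i := if unlift ord0 i is Some j then c j else c0.
have z'0 : z' ord0 = x by rewrite /z' unlift_none.
have c'0 : c' ord0 = c0 by rewrite /c' unlift_none.
have z'S i : z' (lift ord0 i) = z i by rewrite /z' liftK.
have c'S i : c' (lift ord0 i) = c i by rewrite /c' liftK.
have := kpsd.2 n.+1 z' c'.
rewrite big_ord_recl big_ord_recl z'0 c'0.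
under eq_bigr do rewrite z'S c'S.
under [X in _ + X]eq_bigr do rewrite big_ord_recl z'0 c'0 z'S c'S.
under [X in _ + X]eq_bigr => i _ do under eq_bigr => j _ do rewrite z'S c'S.
rewrite big_split /=.
have row0 : \sum_i c0 * c i * k x (z i) = c0 * \sum_i c i * k (z i) x.
  by rewrite mulr_sumr; apply: eq_bigr => i _; rewrite kpsd.1; ring.
have col0 : \sum_i c i * c0 * k (z i) x = c0 * \sum_i c i * k (z i) x.
  by rewrite mulr_sumr; apply: eq_bigr => i _; ring.
rewrite row0 col0; lra.
Qed.

Lemma gram_quadformE X n s (v : 'rV[R]_n) :
  (v *m (gram k X n + s%:M) *m v^T) 0 0 =
  \sum_i \sum_j v 0 i * v 0 j * k (X i.+1) (X j.+1) + s * \sum_i v 0 i ^+ 2.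
Proof.
rewrite mulmxDr mulmxDl mxE; congr (_ + _).
  rewrite mxE; under eq_bigr do rewrite mxE big_distrl /=.
  rewrite exchange_big /=; apply: eq_bigr => i _.
  by apply: eq_bigr => j _; rewrite /gram !mxE; ring.
rewrite mul_mx_scalar -scalemxAl mxE mxE; congr (_ * _); apply: eq_bigr => i _.
by rewrite !mxE expr2.
Qed.

Lemma gram_noise_unitmx X n s : 0 < s -> gram k X n + s%:M \in unitmx.
Proof.
move=> s_gt0; rewrite unitmxE unitfE; apply/negP => /det0P [v v_neq0 vA0].
have quad0 := gram_quadformE X s v; rewrite vA0 mul0mx mxE in quad0.
have Q_ge0 := kpsd.2 n (fun i => X i.+1) (fun i => v 0 i).
have S_ge0 : 0 <= \sum_i v 0 i ^+ 2 by apply: sumr_ge0 => i _; exact: sqr_ge0.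
have S0 : \sum_i v 0 i ^+ 2 = 0 by apply/eqP; rewrite eq_le S_ge0 andbT; nra.
move/eqP: v_neq0; apply; apply/matrixP => i j; rewrite (ord1 i) mxE.
move/eqP: S0; rewrite psumr_eq0 => [/allP/(_ j (mem_index_enum _))|? _]; last first.
  exact: sqr_ge0.
by rewrite /= sqrf_eq0 => /eqP.
Qed.

Lemma gram_noise_tr X n s : (gram k X n + s%:M)^T = gram k X n + s%:M.
Proof.
rewrite raddfD /= tr_scalar_mx; congr (_ + _).
by apply/matrixP => i j; rewrite !mxE kpsd.1.
Qed.
End PsdKernel.

Section BoundedKernel.
Variables (R : realType) (d : nat) (C : set 'rV[R]_d) (k : 'rV[R]_d -> 'rV[R]_d -> R).
Hypotheses (kpsd : psd_kernel k) (k_le1 : forall x x', C x -> C x' -> k x x' <= 1)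
  (k_diag : forall x, C x -> k x x = 1).

Lemma kernel_norm_le1 a b : C a -> C b -> `|k a b| <= 1.
Proof.
move=> Ca Cb; have := psd_kernel_cons kpsd (fun _ : 'I_1 => a) (fun _ => 1) b 1.
rewrite !big_ord1 !k_diag // ler_norml k_le1 // andbT; lra.
Qed.

Lemma gram_quad_le X n (v : 'rV[R]_n) : (forall i : 'I_n, C (X i.+1)) ->
  \sum_i \sum_j v 0 i * v 0 j * k (X i.+1) (X j.+1) <= n%:R * \sum_i v 0 i ^+ 2.
Proof.
move=> CX.
apply: (@le_trans _ _ (\sum_(i < n) \sum_(j < n) (v 0 i ^+ 2 + v 0 j ^+ 2) / 2)).
  apply: ler_sum => i _; apply: ler_sum => j _.
  have := kernel_norm_le1 (CX i) (CX j); rewrite ler_norml => /andP [K_ge K_le].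
  have : 0 <= (1 - k (X i.+1) (X j.+1)) * (v 0 i + v 0 j) ^+ 2.
    by apply: mulr_ge0; [lra | exact: sqr_ge0].
  have : 0 <= (1 + k (X i.+1) (X j.+1)) * (v 0 i - v 0 j) ^+ 2.
    by apply: mulr_ge0; [lra | exact: sqr_ge0].
  lra.
under eq_bigr do rewrite -big_distrl big_split /= sumr_const card_ord.
rewrite -big_distrl big_split /= sumr_const card_ord sumrMnl -mulrnDl -mulr_natl.
lra.
Qed.
End BoundedKernel.

Lemma quad_gain_bounds (R : realFieldType) (q Q S s n : R) :
  q = Q + s * S -> q ^+ 2 <= Q -> Q <= n * S -> 0 <= S -> 0 < s -> 0 <= n ->
  s / (n + s) <= 1 - q <= 1.
Proof.
move=> qE q2_le Q_le S_ge0 s_gt0 n_ge0.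
have q_ge0 : 0 <= q.
  by rewrite qE addr_ge0 ?mulr_ge0 ?(ltW s_gt0) // (le_trans (sqr_ge0 q) q2_le).
have q_gain : q * (q * (n + s)) <= q * n.
  have : s * Q <= s * (n * S) by rewrite ler_pM2l.
  nra.
have qns_le : q * (n + s) <= n.
  have [->|q_neq0] := eqVneq q 0; first by rewrite mul0r.
  by rewrite -(@ler_pM2l _ q) // lt_def q_neq0 q_ge0.
rewrite ler_pdivrMr ?ltr_wpDl //; lra.
Qed.

Section Incumbent.
Variables (R : realType) (d : nat) (C : set 'rV[R]_d) (mu : 'rV[R]_d -> R).
Hypothesis mu_lbounded : exists B, forall x, C x -> B <= mu x.

Lemma has_inf_bpmi x0 : C x0 -> has_inf [set mu x | x in C].
Proof.
move=> Cx0; split; first by exists (mu x0), x0.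
by have [B mu_ge] := mu_lbounded; exists B => _ [x Cx <-]; exact: mu_ge.
Qed.

Lemma bpmi_le x : C x -> bpmi C mu <= mu x.
Proof. by move=> Cx; apply: (ge_inf (has_inf_bpmi Cx).2); exists x. Qed.

Lemma bpmi_adherent x0 e : C x0 -> 0 < e -> exists2 x, C x & mu x < bpmi C mu + e.
Proof.
move=> Cx0 e_gt0; have [_ [x Cx <-] mu_lt] := inf_adherent e_gt0 (has_inf_bpmi Cx0).
by exists x.
Qed.
End Incumbent.

Section StandardNormal.
Variable R : realType.

Lemma phiE (z : R) : phi z = phi 0 * expR (- z ^+ 2 / 2).
Proof.
rewrite /phi /normal_pdf oner_eq0 /normal_fun !subr0 expr1n.
by rewrite expr0n /= oppr0 mul0r expR0 mulr1.
Qed.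

Lemma phi0_gt0 : 0 < phi (0 : R).
Proof.
rewrite /phi /normal_pdf oner_eq0; apply: mulr_gt0; last exact: expR_gt0.
by rewrite normal_peak_gt0 ?oner_eq0.
Qed.

Lemma phi0_sqrE : 2 * pi * phi (0 : R) ^+ 2 = 1.
Proof.
rewrite /phi /normal_pdf oner_eq0 /normal_fun /normal_peak subr0 expr0n /=.
rewrite oppr0 mul0r expR0 mulr1 expr1n mul1r exprVn sqr_sqrtr; last first.
  by rewrite mulrn_wge0 // ltW // pi_gt0.
by rewrite -[pi *+ 2]mulr_natl divff // mulf_neq0 ?pnatr_eq0 // gt_eqF // pi_gt0.
Qed.

Lemma phi_ge_quad (z : R) : phi 0 * (1 - z ^+ 2 / 2) <= phi z.
Proof.
rewrite [phi z]phiE; apply: ler_wpM2l; first exact: ltW phi0_gt0.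
by have := expR_ge1Dx (- z ^+ 2 / 2); rewrite mulNr.
Qed.

Lemma Phi_ge0 (z : R) : 0 <= Phi z.
Proof. exact/fine_ge0/measure_ge0. Qed.

Lemma Phi_le1 (z : R) : Phi z <= 1.
Proof.
have P_le1 : (normal_prob 0 1 `]-oo, z] <= 1)%E.
  by apply: probability_le1; exact: measurable_itv.
have P_ge0 : (0 <= normal_prob (0 : R) 1 `]-oo, z])%E by exact: measure_ge0.
by rewrite /Phi; move: P_ge0 P_le1; case: (normal_prob _ _ _).
Qed.

Lemma EI_formula_le (b s : R) : b <= 0 ->
  b * Phi (b / s) + s * phi (b / s) <= s * phi (b / s).
Proof. by move=> b_le0; rewrite gerDr mulr_le0_ge0 ?Phi_ge0. Qed.

Lemma EI_formula_ge (b s : R) : 0 < s -> - s <= b <= 0 ->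
  s * phi 0 + b * (1 + phi 0) <= b * Phi (b / s) + s * phi (b / s).
Proof.
move=> s_gt0 /andP [b_ge b_le0].
have bPhi : b <= b * Phi (b / s).
  by rewrite -subr_le0 -{1}[b]mulr1 -mulrBr mulr_le0_ge0 // subr_ge0 Phi_le1.
have b2 : b ^+ 2 / s <= - b.
  by rewrite ler_pdivrMr //; nra.
have sphi : phi 0 * (s - b ^+ 2 / s / 2) <= s * phi (b / s).
  apply: le_trans (ler_wpM2l (ltW s_gt0) (phi_ge_quad (b / s))).
  by rewrite expr_div_n le_eqVlt; apply/orP; left; apply/eqP; field; rewrite gt_eqF.
have := phi0_gt0; nra.
Qed.

Lemma abs_le_sqrt_ln (a s z : R) : 0 < a -> s <= 1 ->
  Num.sqrt a <= s * expR (- z ^+ 2 / 2) -> `|z| <= Num.sqrt (ln a^-1).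
Proof.
move=> a_gt0 s_le1 sqrt_le.
have sqrt_le_exp : Num.sqrt a <= expR (- z ^+ 2 / 2).
  by apply: le_trans sqrt_le _; rewrite ler_piMl ?expR_ge0.
have ln_sqrt : ln a = ln (Num.sqrt a) *+ 2.
  by rewrite -lnXn ?sqr_sqrtr ?ltW // sqrtr_gt0.
have ln_sqrt_le : ln (Num.sqrt a) <= - z ^+ 2 / 2.
  by rewrite -[leRHS]expRK ler_ln ?posrE ?sqrtr_gt0 ?expR_gt0.
have z2_le : z ^+ 2 <= ln a^-1 by rewrite lnV ?posrE // ln_sqrt mulr2n; lra.
by rewrite -sqrtr_sqr ler_sqrt // (le_trans (sqr_ge0 z)).
Qed.
End StandardNormal.

Section Posterior.
Variables (R : realType) (d : nat) (C : set 'rV[R]_d) (k : 'rV[R]_d -> 'rV[R]_d -> R).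
Variables (sigma : R) (X : nat -> 'rV[R]_d) (y : nat -> R) (n : nat).
Hypotheses (kpsd : psd_kernel k) (k_le1 : forall x x', C x -> C x' -> k x x' <= 1)
  (k_diag : forall x, C x -> k x x = 1).
Hypotheses (sigma_gt0 : 0 < sigma) (CX : forall i : 'I_n, C (X i.+1)).

Lemma post_var_bounds x : C x ->
  sigma ^+ 2 / (n%:R + sigma ^+ 2) <= post_var k sigma X n x <= 1.
Proof.
(* With w = (K + sigma^2 I)^-1 k_x one has q = w^T K w + sigma^2 |w|^2; positive
   semidefiniteness at X_1..X_n, x with weights (w, -q) gives q^2 <= w^T K w, and
   |k| <= 1 gives w^T K w <= n |w|^2. *)
move=> Cx; rewrite /post_var.
set A := gram k X n + _; set kx := kvec k X n x; set q := (_ *m _ *m _) 0 0.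
set w := (invmx A *m kx)^T.
have kxE : kx = A *m w^T by rewrite trmxK mulKVmx // gram_noise_unitmx // exprn_gt0.
have q_kxw : q = (kx^T *m w^T) 0 0 by rewrite /q trmxK mulmxA.
have qE : q = \sum_i w 0 i * k (X i.+1) x.
  by rewrite q_kxw mxE; apply: eq_bigr => i _; rewrite !mxE mulrC.
set Q := \sum_i \sum_j w 0 i * w 0 j * k (X i.+1) (X j.+1).
set S := \sum_i w 0 i ^+ 2.
have q_quadE : q = Q + sigma ^+ 2 * S.
  by rewrite q_kxw {1}kxE trmx_mul trmxK /A gram_noise_tr // gram_quadformE.
have q2_le : q ^+ 2 <= Q.
  have := psd_kernel_cons kpsd (fun i => X i.+1) (w 0) x (- q).
  by rewrite -qE -/Q k_diag //; lra.
have Q_le : Q <= n%:R * S := @gram_quad_le _ _ _ _ kpsd k_le1 k_diag X n w CX.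
have S_ge0 : 0 <= S by apply: sumr_ge0 => i _; exact: sqr_ge0.
exact: quad_gain_bounds q_quadE q2_le Q_le S_ge0 (exprn_gt0 _ sigma_gt0) (ler0n _ n).
Qed.

Lemma post_sd_bounds x : C x ->
  Num.sqrt (sigma ^+ 2 / (n%:R + sigma ^+ 2)) <= post_sd k sigma X n x <= 1.
Proof.
move=> /post_var_bounds /andP [var_ge var_le1].
have var_ge0 : 0 <= post_var k sigma X n x.
  by apply: le_trans var_ge; rewrite divr_ge0 ?addr_ge0 ?sqr_ge0.
by apply/andP; split; rewrite /post_sd ?ler_sqrt // -sqrtr1 ler_sqrt.
Qed.

Lemma post_sd_floor_gt0 : 0 < Num.sqrt (sigma ^+ 2 / (n%:R + sigma ^+ 2)).
Proof. by rewrite sqrtr_gt0 divr_gt0 ?ltr_wpDl ?exprn_gt0. Qed.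

Lemma post_mean_lbounded : exists B, forall x, C x -> B <= post_mean k sigma X y n x.
Proof.
set w := invmx (gram k X n + (sigma ^+ 2)%:M) *m yvec y n.
exists (- \sum_i `|w i 0|) => x Cx; rewrite lerNl.
apply: le_trans (ler_norm _) _; rewrite normrN /post_mean -mulmxA -/w mxE.
apply: (le_trans (ler_norm_sum _ _ _)); apply: ler_sum => i _.
by rewrite !mxE normrM ler_piMl // (kernel_norm_le1 kpsd k_le1 k_diag (CX i) Cx).
Qed.

Lemma EI_argmax_ge xt : C xt ->
  (forall x, C x -> EI k sigma C X y n x <= EI k sigma C X y n xt) ->
  Num.sqrt (sigma ^+ 2 / (n%:R + sigma ^+ 2)) * phi 0 <= EI k sigma C X y n xt.
Proof.
move=> Cxt EI_max; apply/ler_addgt0Pr => e e_gt0.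
have phi0 := phi0_gt0 R.
set floor := Num.sqrt _.
set e' := Num.min floor (e / (1 + phi 0)).
have e'_gt0 : 0 < e' by rewrite lt_min post_sd_floor_gt0 divr_gt0 //; lra.
have e'_le_floor : e' <= floor by rewrite ge_min lexx.
have e'_le : e' * (1 + phi 0) <= e by rewrite -ler_pdivlMr ?ge_min ?lexx ?orbT //; lra.
have [x Cx mu_lt] := bpmi_adherent post_mean_lbounded Cxt e'_gt0.
have /andP [sd_ge _] := post_sd_bounds Cx; rewrite -/floor in sd_ge.
set b := bpmi C (post_mean k sigma X y n) - post_mean k sigma X y n x.
have b_range : - post_sd k sigma X n x <= b <= 0.
  by rewrite /b subr_le0 bpmi_le ?andbT //; [lra | exact: post_mean_lbounded].
have floor_le : floor * phi 0 <= post_sd k sigma X n x * phi 0.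
  by rewrite ler_wpM2r // ltW.
have b_ge : - e' * (1 + phi 0) <= b * (1 + phi 0).
  by rewrite ler_wpM2r //; [lra | rewrite /b; lra].
have := EI_max x Cx; rewrite {1}/EI /= -/b.
have := EI_formula_ge (lt_le_trans post_sd_floor_gt0 sd_ge) b_range.
lra.
Qed.

Lemma post_mean_gap_le xt : C xt ->
  (forall x, C x -> EI k sigma C X y n x <= EI k sigma C X y n xt) ->
  post_mean k sigma X y n xt - bpmi C (post_mean k sigma X y n)
    <= Num.sqrt (ln ((n%:R + sigma ^+ 2) / sigma ^+ 2)) * post_sd k sigma X n xt.
Proof.
move=> Cxt EI_max.
have /andP [sd_ge sd_le1] := post_sd_bounds Cxt.
have sd_gt0 := lt_le_trans post_sd_floor_gt0 sd_ge.
have phi0 := phi0_gt0 R.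
set b := bpmi C (post_mean k sigma X y n) - post_mean k sigma X y n xt.
have b_le0 : b <= 0 by rewrite subr_le0 bpmi_le //; exact: post_mean_lbounded.
have a_gt0 : 0 < sigma ^+ 2 / (n%:R + sigma ^+ 2).
  by rewrite divr_gt0 ?ltr_wpDl ?exprn_gt0.
have := le_trans (EI_argmax_ge Cxt EI_max) (EI_formula_le (post_sd k sigma X n xt) b_le0).
rewrite [phi (b / _)]phiE mulrCA mulrC ler_pM2l // => /(abs_le_sqrt_ln a_gt0 sd_le1).
rewrite invf_div => b_le.
rewrite -opprB -/b -(ler0_norm b_le0) -(divfK (lt0r_neq0 sd_gt0) b) normrM.
by rewrite (gtr0_norm sd_gt0) ler_wpM2r // ltW.
Qed.
End Posterior.

Lemma c_mu_succE (R : realType) (sigma : R) n :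
  c_mu sigma n.+1 = Num.sqrt (ln ((n%:R + sigma ^+ 2) / sigma ^+ 2)).
Proof. by rewrite /c_mu phi0_sqrE mul1r -addn1 natrD addrK. Qed.

Lemma c_alpha_ge1 (R : realType) : 1 <= c_alpha :> R.
Proof. by rewrite /c_alpha ler_pdivlMr ?ltr0n // mul1r ler_nat. Qed.

Lemma lipschitz_grid_le (R : realFieldType) (L l D : R) (t : nat) : 0 < L ->
  `|D| <= L * l -> l <= 1 / (L * t%:R ^+ 2) -> D <= 1 / t%:R ^+ 2.
Proof.
move=> L_gt0 D_le l_le; apply: le_trans (ler_norm D) (le_trans D_le _).
apply: le_trans (ler_wpM2l (ltW L_gt0) l_le) _.
by rewrite mulrA mulr1 invfM mulrA divff ?gt_eqF // mul1r div1r.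
Qed.

Theorem mainTheorem5 (R : realType) (d : nat) (r : R) (C : set 'rV[R]_d)
  (k : 'rV[R]_d -> 'rV[R]_d -> R) (f : 'rV[R]_d -> R) (L : R)
  (xstar : 'rV[R]_d) (sigma delta : R)
  (X : nat -> 'rV[R]_d) (eps : nat -> R) (y : nat -> R)
  (t : nat) (Ct : seq 'rV[R]_d) (proj : 'rV[R]_d -> 'rV[R]_d) :
  (1 <= d)%N -> 0 < r ->
  compact C ->
  (forall x, C x -> forall i, 0 <= x ord0 i <= r) ->
  psd_kernel k ->
  (forall x x', C x -> C x' -> k x x' <= 1) ->
  (forall x, C x -> k x x = 1) ->
  1 / (r * d%:R) <= L ->
  (forall x x', C x -> C x' -> `|f x - f x'| <= L * l1norm (x - x')) ->
  C xstar -> (forall x, C x -> f xstar <= f x) ->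
  0 < sigma -> 0 < delta < 1 ->
  (forall i, y i = f (X i) + eps i) ->
  (* GP-EI with BPMI: x_i maximizes EI_{i-1} over C, for i = 1..t *)
  (forall i, (1 <= i <= t)%N ->
     C (X i) /\
     forall x, C x -> EI k sigma C X y i.-1 x <= EI k sigma C X y i.-1 (X i)) ->
  (1 <= t)%N ->
  (* discretization C_t *)
  uniq Ct -> (forall c, c \in Ct -> C c) ->
  (forall x, C x ->
     [/\ proj x \in Ct,
         (forall c, c \in Ct -> l1norm (x - proj x) <= l1norm (x - c)) &
         l1norm (x - proj x) <= 1 / (L * (t%:R) ^+ 2)]) ->
  (* event E^r(t) *)
  (forall x, x \in Ct ->
     `|f x - post_mean k sigma X y t.-1 x|
       <= Num.sqrt (@beta_t R d L r delta t) * post_sd k sigma X t.-1 x) ->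
  `|f (X t) - post_mean k sigma X y t.-1 (X t)|
       <= Num.sqrt (@beta_t R d L r delta t) * post_sd k sigma X t.-1 (X t) ->
  f (X t) - f xstar <=
    (c_mu sigma t + phi 0 + Num.sqrt (@beta_t R d L r delta t))
      * post_sd k sigma X t.-1 (X t)
    + c_alpha * Num.sqrt (@beta_t R d L r delta t) * post_sd k sigma X t.-1 (proj xstar)
    + 1 / (t%:R) ^+ 2.
Proof.
move=> d_ge1 r_gt0 _ _ kpsd k_le1 k_diag L_ge f_lip Cxs _ sigma_gt0 _ _ EI_step t_ge1 _ CtC
  proj_spec E_grid E_xt.
have /EI_step [CXt EI_max] : (1 <= t <= t)%N by rewrite t_ge1 leqnn.
have [n tE] : exists n, t = n.+1 by exists t.-1; rewrite prednK.
subst t; rewrite c_mu_succE; rewrite /= in EI_max E_grid E_xt *.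
have CX (i : 'I_n) : C (X i.+1) by have [] := EI_step i.+1 (ltnW (ltn_ord i)).
have gap := post_mean_gap_le kpsd k_le1 k_diag sigma_gt0 CX CXt EI_max.
have [p_in _ p_close] := proj_spec xstar Cxs.
have Cp := CtC _ p_in.
have xi_le := bpmi_le (post_mean_lbounded sigma y kpsd k_le1 k_diag CX) Cp.
set grid_err := 1 / _ ^+ 2.
have f_p_le : f (proj xstar) - f xstar <= grid_err.
  have L_gt0 : 0 < L by apply: lt_le_trans L_ge; rewrite divr_gt0 ?mulr_gt0 ?ltr0n.
  by apply: lipschitz_grid_le L_gt0 _ p_close; rewrite distrC f_lip.
set beta := Num.sqrt _ in E_grid E_xt *.
have beta_sd_le : beta * post_sd k sigma X n (proj xstar) <=
    c_alpha * beta * post_sd k sigma X n (proj xstar).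
  by rewrite -mulrA ler_peMl ?c_alpha_ge1 // mulr_ge0 ?sqrtr_ge0.
have phi_sd_ge0 : 0 <= phi 0 * post_sd k sigma X n (X n.+1).
  by rewrite mulr_ge0 ?sqrtr_ge0 // ltW // phi0_gt0.
move: (E_grid _ p_in) E_xt; rewrite !ler_norml => /andP [Ep1 Ep2] /andP [Ex1 Ex2].
rewrite 2!mulrDl; lra.
Qed.
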